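(* Let $L$ be a normal modal logic with the finite model property, and let $f$ be an arrow of the category $L\mathbf{KFr}_{lf}$. Then $f$ is an epimorphism in $L\mathbf{KFr}_{lf}$ if and only if it is surjective, and $f$ is a regular monomorphism in $L\mathbf{KFr}_{lf}$ if and only if it is injective. Moreover, the coregular factorization of $f$ (factor $f$ through the equalizer of its cokernel pair) is an epimorphism followed by a regular monomorphism.
   Context: $L\mathbf{KFr}_{lf}$ is the category whose objects are locally finite Kripke frames $(W,\prec)$ validating $L$ (locally finite: for each $w$ the set of points reachable from $w$ by finite $\prec$-paths is finite) and whose arrows are p-morphisms: maps $f:W\to V$ with $w\prec w'\Rightarrow f(w)\prec f(w')$ and, whenever $f(w)\prec v'$, there is $w'$ with $w\prec w'$ and $f(w')=v'$. This category is complete and cocomplete. *)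

From Stdlib Require Import List.
Import ListNotations.

Inductive form : Type :=
| Var : nat -> form
| Bot : form
| Imp : form -> form -> form
| Box : form -> form.

(** Classical tautologies: formulas true under every Boolean valuation in
    which propositional variables and boxed subformulas are treated as atoms. *)
Fixpoint beval (v : form -> bool) (p : form) : bool :=
  match p with
  | Var n => v (Var n)
  | Bot => false
  | Imp a b => orb (negb (beval v a)) (beval v b)
  | Box a => v (Box a)
  end.

Definition tautology (p : form) : Prop := forall v : form -> bool, beval v p = true.

Fixpoint subst (s : nat -> form) (p : form) : form :=
  match p with
  | Var n => s n
  | Bot => Bot
  | Imp a b => Imp (subst s a) (subst s b)
  | Box a => Box (subst s a)
  end.

Definition normal_logic (L : form -> Prop) : Prop :=
  (forall p, tautology p -> L p) /\
  (forall p q, L (Imp (Box (Imp p q)) (Imp (Box p) (Box q)))) /\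
  (forall p q, L p -> L (Imp p q) -> L q) /\
  (forall p, L p -> L (Box p)) /\
  (forall s p, L p -> L (subst s p)).

Record frame : Type := Frame {
  carrier :> Type;
  rel : carrier -> carrier -> Prop
}.

Fixpoint sat (F : frame) (V : nat -> carrier F -> Prop) (w : carrier F) (p : form)
  : Prop :=
  match p with
  | Var n => V n w
  | Bot => False
  | Imp a b => sat F V w a -> sat F V w b
  | Box a => forall w', rel F w w' -> sat F V w' a
  end.

Definition frame_valid (F : frame) (p : form) : Prop :=
  forall (V : nat -> carrier F -> Prop) (w : carrier F), sat F V w p.

Definition validates (L : form -> Prop) (F : frame) : Prop :=
  forall p, L p -> frame_valid F p.

Definition finite_frame (F : frame) : Prop :=
  exists l : list (carrier F), forall w, In w l.

Definition fmp (L : form -> Prop) : Prop :=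
  forall p, ~ L p -> exists F : frame, finite_frame F /\ validates L F /\ ~ frame_valid F p.

Inductive reach (F : frame) (w : carrier F) : carrier F -> Prop :=
| reach_refl : reach F w w
| reach_step : forall u v, reach F w u -> rel F u v -> reach F w v.

Definition locally_finite (F : frame) : Prop :=
  forall w : carrier F, exists l : list (carrier F), forall v, reach F w v -> In v l.

Definition LKFr_lf (L : form -> Prop) (F : frame) : Prop :=
  validates L F /\ locally_finite F.

Definition pmorph (F G : frame) (f : carrier F -> carrier G) : Prop :=
  (forall w w', rel F w w' -> rel G (f w) (f w')) /\
  (forall w v', rel G (f w) v' -> exists w', rel F w w' /\ f w' = v').

(** * Categorical notions in L KFr_lf (equality of arrows = pointwise) *)

Definition epi_in (L : form -> Prop) (F G : frame) (f : carrier F -> carrier G) : Prop :=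
  forall (H : frame), LKFr_lf L H ->
  forall g h : carrier G -> carrier H, pmorph G H g -> pmorph G H h ->
  (forall x, g (f x) = h (f x)) -> forall y, g y = h y.

Definition is_equalizer (L : form -> Prop) (E F G : frame)
  (e : carrier E -> carrier F) (g h : carrier F -> carrier G) : Prop :=
  pmorph E F e /\
  (forall x, g (e x) = h (e x)) /\
  (forall (U : frame), LKFr_lf L U ->
   forall k : carrier U -> carrier F, pmorph U F k ->
   (forall x, g (k x) = h (k x)) ->
   exists u : carrier U -> carrier E,
     pmorph U E u /\ (forall x, e (u x) = k x) /\
     (forall u' : carrier U -> carrier E, pmorph U E u' ->
        (forall x, e (u' x) = k x) -> forall x, u' x = u x)).

Definition regular_mono_in (L : form -> Prop) (F G : frame)
  (f : carrier F -> carrier G) : Prop :=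
  exists (H : frame) (g h : carrier G -> carrier H),
    LKFr_lf L H /\ pmorph G H g /\ pmorph G H h /\ is_equalizer L F G H f g h.

Definition is_cokernel_pair (L : form -> Prop) (F G P : frame)
  (f : carrier F -> carrier G) (i1 i2 : carrier G -> carrier P) : Prop :=
  pmorph G P i1 /\ pmorph G P i2 /\
  (forall x, i1 (f x) = i2 (f x)) /\
  (forall (Q : frame), LKFr_lf L Q ->
   forall j1 j2 : carrier G -> carrier Q, pmorph G Q j1 -> pmorph G Q j2 ->
   (forall x, j1 (f x) = j2 (f x)) ->
   exists u : carrier P -> carrier Q,
     pmorph P Q u /\ (forall y, u (i1 y) = j1 y) /\ (forall y, u (i2 y) = j2 y) /\
     (forall u' : carrier P -> carrier Q, pmorph P Q u' ->
        (forall y, u' (i1 y) = j1 y) -> (forall y, u' (i2 y) = j2 y) ->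
        forall z, u' z = u z)).

Definition surj {A B : Type} (f : A -> B) : Prop := forall b, exists a, f a = b.
Definition inj {A B : Type} (f : A -> B) : Prop := forall a a', f a = f a' -> a = a'.

(* Gluing two copies of a frame G along an upset S yields a frame with two
   p-morphisms from G that agree exactly on S, and it is again an object of
   L KFr_lf, being covered by these two maps.  Images of p-morphisms are
   upsets, so this test detects non-surjective arrows; applied to a cokernel
   pair it shows that the cokernel pair of f equalizes only the image of f.
   An equalizer of g, h is isomorphic to the generated subframe of points all
   of whose successors are equalized, hence injective; conversely an
   injective p-morphism is the equalizer of the two gluings along its image. *)

From Stdlib Require Import List Classical ClassicalEpsilon ProofIrrelevance.
Import ListNotations.

Definition upset (G : frame) (S : carrier G -> Prop) : Prop :=
  forall x y, rel G x y -> S x -> S y.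

Definition image {A B : Type} (f : A -> B) (y : B) : Prop := exists x, f x = y.

Lemma reach_trans (F : frame) a b c : reach F a b -> reach F b c -> reach F a c.
Proof. intros Hab Hbc; induction Hbc; [exact Hab | econstructor; eauto]. Qed.

Lemma reach_rel (F : frame) a b : rel F a b -> reach F a b.
Proof. intros Hab; econstructor; [constructor | exact Hab]. Qed.

Lemma pmorph_id (F : frame) : pmorph F F (fun x => x).
Proof. split; eauto. Qed.

Lemma pmorph_comp (A B C : frame) (f : carrier A -> carrier B) (g : carrier B -> carrier C) :
  pmorph A B f -> pmorph B C g -> pmorph A C (fun x => g (f x)).
Proof.
  intros [Hf Hfb] [Hg Hgb]; split; auto.
  intros w c Hc; destruct (Hgb (f w) c Hc) as [b [Hb <-]].
  destruct (Hfb w b Hb) as [a [Ha <-]]; eauto.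
Qed.

Lemma pmorph_image_upset (F G : frame) (f : carrier F -> carrier G) :
  pmorph F G f -> upset G (image f).
Proof. intros [_ Hb] x y Hxy [a <-]; destruct (Hb a y Hxy) as [a' [_ <-]]; eexists; eauto. Qed.

Lemma pmorph_reach (F G : frame) (f : carrier F -> carrier G) a b :
  pmorph F G f -> reach F a b -> reach G (f a) (f b).
Proof. intros [Hf _] Hab; induction Hab; econstructor; eauto. Qed.

Lemma pmorph_reach_lift (F G : frame) (f : carrier F -> carrier G) a y :
  pmorph F G f -> reach G (f a) y -> exists b, reach F a b /\ f b = y.
Proof.
  intros [_ Hb] Hy; induction Hy as [|u v _ [b [Hab <-]] Huv].
  - exists a; split; [constructor | reflexivity].
  - destruct (Hb b v Huv) as [c [Hbc <-]]; exists c; split; [econstructor|]; eauto.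
Qed.

(* An injective p-morphism reflects the relation, so any map whose composite
   with it is a p-morphism is itself one. *)
Lemma pmorph_corestrict (F K G : frame) (i : carrier K -> carrier G)
    (f : carrier F -> carrier G) (v : carrier F -> carrier K) :
  pmorph K G i -> inj i -> pmorph F G f -> (forall x, i (v x) = f x) ->
  pmorph F K v.
Proof.
  intros [Hi Hib] Hinj [Hf Hfb] Hv; split.
  - intros w w' Hww'.
    assert (Hr : rel G (i (v w)) (i (v w'))) by (rewrite !Hv; auto).
    destruct (Hib _ _ Hr) as [k [Hk Ek]]; apply Hinj in Ek; subst; exact Hk.
  - intros w k Hk; apply Hi in Hk; rewrite Hv in Hk.
    destruct (Hfb _ _ Hk) as [w' [Hww' Ew']]; exists w'; split; auto.
    apply Hinj; rewrite Hv; exact Ew'.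
Qed.

Lemma sat_ext (F : frame) V V' : (forall n x, V n x <-> V' n x) ->
  forall p w, sat F V w p <-> sat F V' w p.
Proof.
  intros HV p; induction p as [n| |p1 IH1 p2 IH2|p IH]; intros w; simpl.
  - apply HV.
  - tauto.
  - rewrite (IH1 w), (IH2 w); tauto.
  - split; intros H w' Hw; apply IH; auto.
Qed.

Lemma sat_pmorph (F G : frame) (f : carrier F -> carrier G) : pmorph F G f ->
  forall V p w, sat G V (f w) p <-> sat F (fun n x => V n (f x)) w p.
Proof.
  intros [Hf Hb] V p; induction p as [n| |p1 IH1 p2 IH2|p IH]; intros w; simpl.
  - tauto.
  - tauto.
  - rewrite (IH1 w), (IH2 w); tauto.
  - split.
    + intros H w' Hw; apply IH, H, Hf, Hw.
    + intros H v' Hv; destruct (Hb w v' Hv) as [w' [Hw' <-]]; apply IH, H, Hw'.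
Qed.

Lemma LKFr_lf_of_cover L (H : frame) :
  (forall w : carrier H, exists (K : frame) (pi : carrier K -> carrier H) k,
       LKFr_lf L K /\ pmorph K H pi /\ pi k = w) -> LKFr_lf L H.
Proof.
  intros Hcover; split.
  - intros p Lp V w; destruct (Hcover w) as [K [pi [k [[HK _] [Hpi <-]]]]].
    apply (sat_pmorph K H pi Hpi), HK, Lp.
  - intros w; destruct (Hcover w) as [K [pi [k [[_ HK] [Hpi <-]]]]].
    destruct (HK k) as [l Hl]; exists (map pi l); intros v Hv.
    destruct (pmorph_reach_lift K H pi k v Hpi Hv) as [k' [Hkk' <-]].
    apply in_map, Hl, Hkk'.
Qed.

Lemma list_preimage {A B : Type} (i : A -> B) : inj i ->
  forall l : list B, exists l' : list A, forall a, In (i a) l -> In a l'.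
Proof.
  intros Hi l; induction l as [|b l [l' Hl']].
  - exists []; simpl; tauto.
  - destruct (classic (image i b)) as [[a0 Ha0]|Hb].
    + exists (a0 :: l'); intros a [Ha|Ha]; [left; apply Hi; congruence | right; auto].
    + exists l'; intros a [Ha|Ha]; [exfalso; apply Hb; exists a | ]; auto.
Qed.

Lemma LKFr_lf_of_inj_pmorph L (K G : frame) (i : carrier K -> carrier G) :
  pmorph K G i -> inj i -> LKFr_lf L G -> LKFr_lf L K.
Proof.
  intros Hi Hinj [HG HGlf]; split.
  - intros p Lp V w.
    (* transport V along i; injectivity makes the pulled-back valuation V again *)
    pose (V' := fun n x => exists k, i k = x /\ V n k).
    apply (sat_ext K (fun n x => V' n (i x))).
    + intros n x; split; [intros [k [Hk HV]]; apply Hinj in Hk; subst; exact HV |].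
      intros HV; exists x; auto.
    + apply (sat_pmorph K G i Hi), HG, Lp.
  - intros w; destruct (HGlf (i w)) as [l Hl].
    destruct (list_preimage i Hinj l) as [l' Hl']; exists l'.
    intros v Hv; apply Hl', Hl, pmorph_reach; assumption.
Qed.

Section Subframe.
Variables (G : frame) (P : carrier G -> Prop).

Definition subframe : frame :=
  Frame {x : carrier G | P x} (fun a b => rel G (proj1_sig a) (proj1_sig b)).

Definition subframe_incl (x : carrier subframe) : carrier G := proj1_sig x.

Lemma subframe_incl_inj : inj subframe_incl.
Proof. intros [a pa] [b pb] E; apply subset_eq_compat, E. Qed.

Lemma subframe_incl_pmorph : upset G P -> pmorph subframe G subframe_incl.
Proof.
  intros HP; split; [simpl; auto |].
  intros [w pw] v Hv; exists (exist P v (HP w v Hv pw)); split; auto.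
Qed.

End Subframe.

Section Double.
Variables (G : frame) (S : carrier G -> Prop).

(* The left copy is all of [G]; the right copy only has the points outside [S],
   and its arrows into [S] land in the left copy. *)
Definition double_rel (a b : carrier G + {x : carrier G | ~ S x}) : Prop :=
  match a, b with
  | inl a, inl b => rel G a b
  | inr a, inl b => rel G (proj1_sig a) b /\ S b
  | inr a, inr b => rel G (proj1_sig a) (proj1_sig b)
  | inl _, inr _ => False
  end.

Definition double : frame := Frame (carrier G + {x : carrier G | ~ S x}) double_rel.

Definition double_left (x : carrier G) : carrier double := inl x.

Definition double_right (x : carrier G) : carrier double :=
  match excluded_middle_informative (S x) with
  | left _ => inl x
  | right nSx => inr (exist _ x nSx)
  end.

Lemma double_right_in x : S x -> double_right x = inl x.
Proof.
  intros Sx; unfold double_right; destruct excluded_middle_informative; [reflexivity | contradiction].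
Qed.

Lemma double_right_out x (nSx : ~ S x) : double_right x = inr (exist _ x nSx).
Proof.
  unfold double_right; destruct excluded_middle_informative as [Sx|nSx']; [contradiction|].
  do 2 f_equal; apply proof_irrelevance.
Qed.

Lemma double_left_right x : double_left x = double_right x <-> S x.
Proof.
  split; [|intros Sx; rewrite double_right_in; auto].
  intros E; apply NNPP; intros nSx; rewrite (double_right_out x nSx) in E; discriminate.
Qed.

Lemma double_left_pmorph : pmorph G double double_left.
Proof. split; [simpl; auto |]; intros w [b|b] Hb; [exists b | contradiction]; auto. Qed.

Hypothesis S_upset : upset G S.

Lemma double_right_pmorph : pmorph G double double_right.
Proof.
  split.
  - intros w w' Hww'; destruct (classic (S w)) as [Sw|nSw].
    + rewrite (double_right_in w Sw), (double_right_in w' (S_upset _ _ Hww' Sw)); exact Hww'.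
    + rewrite (double_right_out w nSw).
      destruct (classic (S w')) as [Sw'|nSw'].
      * rewrite (double_right_in w' Sw'); split; auto.
      * rewrite (double_right_out w' nSw'); exact Hww'.
  - intros w b Hb; destruct (classic (S w)) as [Sw|nSw].
    + rewrite (double_right_in w Sw) in Hb; destruct b as [b|b]; [|contradiction].
      exists b; split; [exact Hb |]; apply double_right_in, (S_upset w); auto.
    + rewrite (double_right_out w nSw) in Hb; destruct b as [b|[b nSb]].
      * destruct Hb as [Hb Sb]; exists b; split; [|apply double_right_in]; auto.
      * exists b; split; [exact Hb | apply double_right_out].
Qed.

Lemma double_LKFr_lf L : LKFr_lf L G -> LKFr_lf L double.
Proof.
  intros HG; apply LKFr_lf_of_cover; intros [x|[x nSx]].
  - exists G, double_left, x; split; [|split]; auto using double_left_pmorph.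
  - exists G, double_right, x; split; [|split]; auto using double_right_pmorph.
    apply double_right_out.
Qed.

End Double.

Lemma surj_epi_in L (F G : frame) (f : carrier F -> carrier G) : surj f -> epi_in L F G f.
Proof. intros Hf H _ g h _ _ E y; destruct (Hf y) as [a <-]; auto. Qed.

Lemma epi_in_surj L (F G : frame) (f : carrier F -> carrier G) :
  LKFr_lf L G -> pmorph F G f -> epi_in L F G f -> surj f.
Proof.
  intros HG Hf Hepi y; pose proof (pmorph_image_upset F G f Hf) as Himf.
  apply (double_left_right G (image f)).
  apply (Hepi _ (double_LKFr_lf G _ Himf L HG) _ _
           (double_left_pmorph G _) (double_right_pmorph G _ Himf)).
  intros x; apply double_left_right; exists x; reflexivity.
Qed.

Lemma cokernel_pair_equalized_image L (F G P : frame) (f : carrier F -> carrier G) i1 i2 :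
  LKFr_lf L G -> pmorph F G f -> is_cokernel_pair L F G P f i1 i2 ->
  forall y, i1 y = i2 y -> image f y.
Proof.
  intros HG Hf [_ [_ [_ Hcok]]] y Hy; pose proof (pmorph_image_upset F G f Hf) as Himf.
  destruct (Hcok _ (double_LKFr_lf G _ Himf L HG) _ _
              (double_left_pmorph G _) (double_right_pmorph G _ Himf))
    as [u [_ [Hu1 [Hu2 _]]]].
  { intros x; apply double_left_right; exists x; reflexivity. }
  apply (double_left_right G (image f)); rewrite <- Hu1, <- Hu2, Hy; reflexivity.
Qed.

Lemma equalizer_mono L (E F G : frame) (e : carrier E -> carrier F) g h :
  is_equalizer L E F G e g h ->
  forall (U : frame), LKFr_lf L U ->
  forall k1 k2 : carrier U -> carrier E, pmorph U E k1 -> pmorph U E k2 ->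
  (forall x, e (k1 x) = e (k2 x)) -> forall x, k1 x = k2 x.
Proof.
  intros [He [Heq Huniv]] U HU k1 k2 Hk1 Hk2 Ek x.
  destruct (Huniv U HU (fun x => e (k2 x)) (pmorph_comp _ _ _ _ _ Hk2 He)
              (fun x => Heq (k2 x))) as [u [_ [_ Hu]]].
  rewrite (Hu k1 Hk1 Ek x), (Hu k2 Hk2 (fun _ => eq_refl) x); reflexivity.
Qed.

Lemma equalizer_inj L (E F G : frame) (e : carrier E -> carrier F) g h :
  LKFr_lf L E -> LKFr_lf L F -> is_equalizer L E F G e g h -> inj e.
Proof.
  intros HE HF Heqz; pose proof Heqz as [He [Heq Huniv]].
  set (P := fun x => forall y, reach F x y -> g y = h y).
  assert (HP : upset F P).
  { intros x y Hxy Px z Hyz; apply Px, (reach_trans _ _ y); auto using reach_rel. }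
  pose proof (subframe_incl_pmorph F P HP) as Hincl.
  assert (Pe : forall x, P (e x)).
  { intros x y Hy; destruct (pmorph_reach_lift _ _ e x y He Hy) as [b [_ <-]]; apply Heq. }
  pose (v := fun x => exist P (e x) (Pe x) : carrier (subframe F P)).
  assert (Hv : pmorph E (subframe F P) v)
    by (apply (pmorph_corestrict _ _ _ _ e v Hincl (subframe_incl_inj F P) He); reflexivity).
  destruct (Huniv _ (LKFr_lf_of_inj_pmorph L _ _ _ Hincl (subframe_incl_inj F P) HF)
              _ Hincl) as [u [Hu [Hue _]]].
  { intros [x Px]; apply Px; constructor. }
  (* [u] is a retraction of [v], since [e (u (v x)) = e x] *)
  assert (Huv : forall x, u (v x) = x).
  { apply (equalizer_mono L E F G e g h Heqz E HE); auto using pmorph_comp, pmorph_id. }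
  intros a a' Ea; rewrite <- (Huv a), <- (Huv a'); f_equal.
  apply subframe_incl_inj; exact Ea.
Qed.

Lemma inj_regular_mono_in L (F G : frame) (f : carrier F -> carrier G) :
  LKFr_lf L G -> pmorph F G f -> inj f -> regular_mono_in L F G f.
Proof.
  intros HG Hf Hinj; pose proof (pmorph_image_upset F G f Hf) as Himf.
  exists (double G (image f)), (double_left G _), (double_right G _).
  split; [apply double_LKFr_lf; auto |].
  split; [apply double_left_pmorph |]; split; [apply double_right_pmorph; auto |].
  split; [exact Hf |]; split.
  { intros x; apply double_left_right; exists x; reflexivity. }
  intros U HU k Hk Hgk.
  assert (Hk_im : forall x, image f (k x)) by (intros x; apply double_left_right, Hgk).
  destruct (choice (fun x a => f a = k x) Hk_im) as [u Hu].
  exists u; split; [|split; [exact Hu |]].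
  - apply (pmorph_corestrict U F G f k u); auto.
  - intros u' _ Hu' x; apply Hinj; rewrite Hu', Hu; reflexivity.
Qed.

Theorem proposition5p1 :
  forall (L : form -> Prop), normal_logic L -> fmp L ->
  forall (F G : frame), LKFr_lf L F -> LKFr_lf L G ->
  forall f : carrier F -> carrier G, pmorph F G f ->
    (epi_in L F G f <-> surj f) /\
    (regular_mono_in L F G f <-> inj f) /\
    (forall (P : frame) (i1 i2 : carrier G -> carrier P),
       LKFr_lf L P -> is_cokernel_pair L F G P f i1 i2 ->
     forall (E : frame) (e : carrier E -> carrier G),
       LKFr_lf L E -> is_equalizer L E G P e i1 i2 ->
     forall m : carrier F -> carrier E, pmorph F E m ->
       (forall x, e (m x) = f x) ->
       epi_in L F E m /\ regular_mono_in L E G e).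
Proof.
  intros L _ _ F G HF HG f Hf; split; [|split].
  - split; [apply epi_in_surj | apply surj_epi_in]; auto.
  - split; [|apply inj_regular_mono_in; auto].
    intros [H [g [h [_ [_ [_ Heqz]]]]]]; eapply equalizer_inj; eauto.
  - intros P i1 i2 HP Hcok E e HE Heqz m Hm Hme; split.
    + apply surj_epi_in; intros z.
      destruct (cokernel_pair_equalized_image L F G P f i1 i2 HG Hf Hcok (e z))
        as [a Ha]; [apply Heqz |].
      exists a; apply (equalizer_inj L E G P e i1 i2 HE HG Heqz); congruence.
    + destruct Hcok as [Hi1 [Hi2 _]]; exists P, i1, i2; auto.
Qed.
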